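(* Let $\mathfrak{g}$ be a Lie algebra over $\mathbb{F}$ with a symmetric invariant bilinear form $\langle\cdot,\cdot\rangle$, and let $\hat{\mathfrak{g}}=\mathfrak{g}\otimes\mathbb{F}[t,t^{-1}]\oplus\mathbb{F}\mathbf{k}$ be the affine Lie algebra with $\mathbf{k}$ central and $[a\otimes t^m,b\otimes t^n]=[a,b]\otimes t^{m+n}+m\langle a,b\rangle\delta_{m+n,0}\mathbf{k}$. Then $\hat{\mathfrak{g}}$ is an $\mathcal{H}$-module Lie algebra with, for $r\in\mathbb{N}$, $a\in\mathfrak{g}$, $n\in\mathbb{Z}$: $L_{-1}^{(r)}\mathbf{k}=L_1^{(r)}\mathbf{k}=L_0^{(r)}\mathbf{k}=\delta_{r,0}\mathbf{k}$, $L_{-1}^{(r)}(a\otimes t^n)=(-1)^r\binom{n}{r}a\otimes t^{n-r}$, $L_1^{(r)}(a\otimes t^n)=\binom{-n}{r}a\otimes t^{n+r}$, $L_0^{(r)}(a\otimes t^n)=\binom{2n}{r}a\otimes t^n$.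
   Context: $\mathbb{F}$ is an algebraically closed field of odd prime characteristic $p$. $\mathcal{H}$: let $\mathfrak{sl}_2$ over $\mathbb{C}$ have basis $L_{-1},L_0,L_1$ with $[L_1,L_{-1}]=2L_0$, $[L_0,L_{\pm1}]=\mp L_{\pm1}$; put $L_{\pm1}^{(n)}=L_{\pm1}^n/n!$, $L_0^{(n)}=\binom{-2L_0}{n}$ in $U(\mathfrak{sl}_2)$; $U(\mathfrak{sl}_2)_{\mathbb{Z}}$ is the $\mathbb{Z}$-span of the $L_{-1}^{(i)}L_0^{(j)}L_1^{(k)}$, and $\mathcal{H}=\mathbb{F}\otimes_{\mathbb{Z}}U(\mathfrak{sl}_2)_{\mathbb{Z}}$, a Hopf algebra with $\Delta(L_{\pm1}^{(n)})=\sum_iL_{\pm1}^{(n-i)}\otimes L_{\pm1}^{(i)}$, $\Delta(L_0^{(n)})=\sum_iL_0^{(n-i)}\otimes L_0^{(i)}$, $\varepsilon(L_{\pm1}^{(n)})=\varepsilon(L_0^{(n)})=\delta_{n,0}$; it is generated as an algebra by the $L_{\pm1}^{(n)}$. For a bialgebra $B$, a $B$-module Lie algebra is a Lie algebra $\mathfrak{a}$ with a $B$-module structure such that $b[u,v]=\sum[b^{(1)}u,b^{(2)}v]$ for $b\in B$, $u,v\in\mathfrak{a}$, where $\Delta(b)=\sum b^{(1)}\otimes b^{(2)}$. *)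

From HB Require Import structures.
From mathcomp Require Import all_boot all_order all_algebra.
From mathcomp Require Import finmap.
From mathcomp Require Import monalg.

Set Implicit Arguments.
Unset Strict Implicit.
Unset Printing Implicit Defensive.

Import Order.TTheory GRing.Theory Num.Theory.
Local Open Scope ring_scope.

(* Generalized binomial coefficient binom(z, r) for z : int, r : nat.
   binom(n, r) = 'C(n, r) for n >= 0, and
   binom(-(n+1), r) = (-1)^r 'C(n + r, r). *)
Definition gbinom (z : int) (r : nat) : int :=
  match z with
  | Posz n => ('C(n, r))%:Z
  | Negz n => (-1) ^+ r * ('C(n + r, r))%:Z
  end.

Definition is_lie_bracket (F : fieldType) (g : lmodType F) (br : g -> g -> g)
  : Prop :=
  [/\ (forall (c : F) (a b d : g), br (c *: a + b) d = c *: br a d + br b d),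
      (forall (c : F) (a b d : g), br d (c *: a + b) = c *: br d a + br d b),
      (forall a : g, br a a = 0) &
      (forall a b d : g, br a (br b d) + br b (br d a) + br d (br a b) = 0)].

Definition is_sym_inv_form (F : fieldType) (g : lmodType F)
  (br : g -> g -> g) (form : g -> g -> F) : Prop :=
  [/\ (forall (c : F) (a b d : g), form (c *: a + b) d = c * form a d + form b d),
      (forall a b : g, form a b = form b a) &
      (forall a b d : g, form (br a b) d = form a (br b d))].

(* An element is a pair (x, z): x a finitely supported function int -> g   *)
(* (x@_n is the coefficient of t^n) and z the coefficient of k.            *)
Section Affine.
Variables (F : fieldType) (g : lmodType F).

Definition loopg := {malg g[int]}.
Definition ghat := (loopg * F)%type.

Definition tn (a : g) (n : int) : ghat := (<< a *g n >>, 0).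
Definition kc : ghat := (0, 1).

Definition loop_scale (c : F) (x : loopg) : loopg :=
  \sum_(n <- msupp x) << c *: x@_n *g n >>.

Definition ghat_scale (c : F) (u : ghat) : ghat := (loop_scale c u.1, c * u.2).

Variables (br : g -> g -> g) (form : g -> g -> F).

(* [a t^m + .., b t^n + ..] = [a,b] t^(m+n) + m <a,b> delta_{m+n,0} k ;
   k is central. *)
Definition ghat_br (u v : ghat) : ghat :=
  (\sum_(m <- msupp u.1) \sum_(n <- msupp v.1) << br u.1@_m v.1@_n *g (m + n) >>,
   \sum_(m <- msupp u.1) (m%:~R * form u.1@_m v.1@_(- m))).

End Affine.

(* We characterize an F-algebra H together with the elements               *)
(*   Lm n = L_{-1}^{(n)},  L0 n = L_0^{(n)},  Lp n = L_1^{(n)}              *)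
(* by: the PBW monomials L_{-1}^{(i)} L_0^{(j)} L_1^{(k)} form an F-basis   *)
(* of H (this is the Kostant Z-basis of U(sl_2)_Z tensored with F), and     *)
(* the straightening relations, valid in U(sl_2)_Z, which determine the    *)
(* product of any two basis elements.  Hence any such H is isomorphic to   *)
(* the hyperalgebra of the paper (by an isomorphism respecting Lm, L0, Lp).*)
Section Hyper.
Variables (F : fieldType) (H : algType F) (Lm L0 Lp : nat -> H).

Definition PBW (i j k : nat) : H := Lm i * L0 j * Lp k.

(* binom(-2 L_0 + c, t) expanded in the basis L_0^{(m)} (Vandermonde) *)
Definition L0shift (c : int) (t : nat) : H :=
  \sum_(m < t.+1) (gbinom c (t - m))%:~R *: L0 m.

Record is_hyperalgebra_sl2 : Prop := {
  hyp_Lm0 : Lm 0 = 1;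
  hyp_L00 : L0 0 = 1;
  hyp_Lp0 : Lp 0 = 1;
  hyp_LmLm : forall m n, Lm m * Lm n = ('C(m + n, m))%:R *: Lm (m + n);
  hyp_LpLp : forall m n, Lp m * Lp n = ('C(m + n, m))%:R *: Lp (m + n);
  (* binom(x,m) binom(x,n) = sum_{l=n}^{m+n} C(l,m) C(m,l-n) binom(x,l) *)
  hyp_L0L0 : forall m n,
    L0 m * L0 n = \sum_(n <= l < (m + n).+1) ('C(l, m) * 'C(m, l - n))%:R *: L0 l;
  (* L_0 L_{-1} = L_{-1} (L_0 + 1) *)
  hyp_L0Lm : forall n i,
    L0 n * Lm i = \sum_(m < n.+1) (gbinom (- (2 * i)%:Z) (n - m))%:~R *: (Lm i * L0 m);
  (* L_1 L_0 = (L_0 + 1) L_1 *)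
  hyp_LpL0 : forall k n,
    Lp k * L0 n = \sum_(m < n.+1) (gbinom (- (2 * k)%:Z) (n - m))%:~R *: (L0 m * Lp k);
  hyp_LpLm : forall n i,
    Lp n * Lm i = \sum_(t < (minn n i).+1)
       (-1) ^+ t *: (Lm (i - t) * L0shift ((2 * t)%:Z - n%:Z - i%:Z) t * Lp (n - t));
  hyp_span : forall h : H, exists (N : nat) (c : nat -> nat -> nat -> F),
    h = \sum_(i < N) \sum_(j < N) \sum_(k < N) c i j k *: PBW i j k;
  hyp_indep : forall (N : nat) (c : nat -> nat -> nat -> F),
    \sum_(i < N) \sum_(j < N) \sum_(k < N) c i j k *: PBW i j k = 0 ->
    forall i j k, (i < N)%N -> (j < N)%N -> (k < N)%N -> c i j k = 0
}.

End Hyper.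

(** The divided powers of L_(-1), L_0 and L_1 act by weighted shifts
    a (x) t^n |-> phi(n) a (x) t^(n + d), k |-> phi(0) k, with generalized binomial
    coefficients as weights.  Composing such shifts multiplies the weights, so every
    straightening relation of the hyperalgebra becomes an identity between integer binomial
    coefficients: the trinomial revision, Vandermonde's convolution and, for the commutator
    of L_1^(n) and L_(-1)^(i), a Kostant-type identity proved by induction on n.  A general
    element acts through its coordinates in the PBW basis, and the straightening relations
    make this action multiplicative.  Each of the three families is a higher derivation of
    the bracket (Vandermonde again, the absorption identity taking care of the cocycle), and
    higher derivations compose, which gives the module Lie algebra condition on the PBW
    monomials. *)

From mathcomp Require Import all_boot all_order all_algebra.
From mathcomp Require Import finmap monalg.
From mathcomp Require Import ring zify.
From Stdlib Require Import ClassicalEpsilon.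
Import GRing.Theory.
Local Open Scope ring_scope.
Set Implicit Arguments.
Unset Strict Implicit.
Unset Printing Implicit Defensive.

(* Lets [ring] use the relation [a = b]. *)
Lemma eq_of_relation (R : comPzRingType) (L M a b c : R) :
  a = b -> L - M = c * (a - b) -> L = M.
Proof. by move=> -> /eqP; rewrite subrr mulr0 subr_eq0 => /eqP. Qed.

Lemma expr_subnKC (R : pzSemiRingType) (x : R) m n :
  (m <= n)%N -> x ^+ n = x ^+ m * x ^+ (n - m).
Proof. by move=> le; rewrite -exprD subnKC. Qed.

Lemma sum_ord_widen0 (V : nmodType) (n n' : nat) (F : nat -> V) : (n <= n')%N ->
  (forall i, (n <= i < n')%N -> F i = 0) ->
  \sum_(i < n') F i = \sum_(i < n) F i.
Proof.
move=> le h; rewrite (big_ord_widen _ _ le) [RHS]big_mkcond /=.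
apply: eq_bigr => i _; case: ifP => // /negbT; rewrite -leqNgt => hi.
by rewrite h // hi ltn_ord.
Qed.

(** * Generalized binomial coefficients *)

Lemma gbinom_nat (n r : nat) : gbinom n%:Z r = ('C(n, r))%:Z.
Proof. by []. Qed.

Lemma gbinom0 z : gbinom z 0 = 1.
Proof. by case: z => n; rewrite /gbinom ?bin0 ?expr0 ?mul1r. Qed.

Lemma gbinom0l r : gbinom 0 r = (r == 0%N)%:R.
Proof. by rewrite gbinom_nat bin0n; case: r. Qed.

Lemma gbinomS z r : gbinom (z + 1) r.+1 = gbinom z r.+1 + gbinom z r.
Proof.
case: z => [n|[|n]].
- by rewrite -(PoszD n 1) addn1 !gbinom_nat binS PoszD.
- have -> : Negz 0 + 1 = 0 by rewrite NegzE addNr.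
  rewrite gbinom0l /gbinom add0n !binn exprS /=; ring.
- have -> : Negz n.+1 + 1 = Negz n by rewrite !NegzE; lia.
  rewrite /gbinom -[(n.+1 + r.+1)%N]/((n + r.+1).+1) addSnnS binS PoszD exprS.
  ring.
Qed.

Lemma mul_gbinom_left z r : (r.+1)%:Z * gbinom z r.+1 = (z - r%:Z) * gbinom z r.
Proof.
case: z => n; rewrite /gbinom.
- rewrite -PoszM mul_bin_left.
  case: (leqP r n) => h; first by rewrite PoszM -subzn.
  by rewrite bin_small // muln0 mulr0.
- have := mul_bin_diag (n + r.+1) r; rewrite addnS /= => h.
  rewrite NegzE exprS.
  have -> : (r.+1)%:Z * (-1 * (-1) ^+ r * ('C((n + r).+1, r.+1))%:Z)
     = - (-1) ^+ r * ((r.+1 * 'C((n + r).+1, r.+1))%N)%:Z by rewrite PoszM; ring.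
  rewrite -h PoszM -[(n + r).+1]addn1 !PoszD; ring.
Qed.

Lemma pascal_unique (f g : int -> nat -> int) :
  (forall z, f z 0%N = g z 0%N) ->
  (forall z n, f (z + 1) n.+1 = f z n.+1 + f z n) ->
  (forall z n, g (z + 1) n.+1 = g z n.+1 + g z n) ->
  (forall n, f 0 n = g 0 n) -> forall z n, f z n = g z n.
Proof.
move=> eq0 pf pg eq0l z; elim/int_rect: z => [//|m IH|m IH].
  by case=> [|n]; rewrite ?eq0 // -addn1 PoszD pf pg !IH.
have e : - (m.+1)%:Z + 1 = - m%:Z by rewrite -addn1 PoszD; ring.
elim=> [|n IHn]; first exact: eq0.
apply: (addIr (g (- (m.+1)%:Z) n)).
by rewrite -pg e -IH -IHn -pf e.
Qed.

Lemma gbinom_vandermonde_rev y z n :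
  \sum_(m < n.+1) gbinom y (n - m) * gbinom z m = gbinom (y + z) n.
Proof.
symmetry.
pose S z n := \sum_(m < n.+1) gbinom y (n - m) * gbinom z m.
apply: (@pascal_unique (fun z n => gbinom (y + z) n) S) => {z n}.
- by move=> z; rewrite /S big_ord1 !gbinom0 mulr1.
- by move=> z n; rewrite addrA gbinomS.
- move=> z n; rewrite /S big_ord_recl [in RHS]big_ord_recl !gbinom0 subn0.
  under eq_bigr => i _ do rewrite lift0 subSS gbinomS mulrDr.
  under [X in _ = _ + X + _]eq_bigr => i _ do rewrite lift0 subSS.
  by rewrite big_split /= addrA.
- move=> n; rewrite /S addr0 big_ord_recl gbinom0 mulr1 subn0.
  by rewrite big1 ?addr0 // => i _; rewrite lift0 gbinom0l mulr0.
Qed.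

Lemma gbinom_vandermonde y z n :
  \sum_(m < n.+1) gbinom y m * gbinom z (n - m) = gbinom (y + z) n.
Proof.
rewrite -gbinom_vandermonde_rev [RHS](reindex_inj rev_ord_inj) /=.
by apply: eq_bigr => i _; rewrite subSS subKn // -ltnS.
Qed.

Lemma gbinom_trinomial (n : int) (a b : nat) :
  gbinom (n - b%:Z) a * gbinom n b = ('C(a + b, a))%:Z * gbinom n (a + b).
Proof.
elim: a => [|a IH]; first by rewrite gbinom0 add0n bin0 mul1r.
apply: (@mulfI _ (a.+1)%:Z) => //.
rewrite mulrA mul_gbinom_left -mulrA IH addSn [RHS]mulrA -PoszM -mul_bin_diag /=.
rewrite PoszM (mulrC _ (Posz _)) -mulrA mul_gbinom_left PoszD; ring.
Qed.

Lemma gbinom_absorption (y : int) (k : nat) :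
  (y - k%:Z) * gbinom y k = y * gbinom (y - 1) k.
Proof.
case: k => [|k]; first by rewrite !gbinom0 subr0.
have := gbinomS (y - 1) k; rewrite subrK => ->.
have e := mul_gbinom_left (y - 1) k; rewrite -addn1 PoszD in e *.
by apply: (eq_of_relation e (c := -1)); ring.
Qed.

Lemma gbinom_predn (r : nat) : gbinom (r%:Z - 1) r = (r == 0%N)%:R.
Proof.
case: r => [|r]; first by rewrite gbinom0.
by rewrite -[in _ - 1]addn1 PoszD addrK gbinom_nat bin_small.
Qed.

Lemma gbinom_mul_sum (x : int) (m j : nat) :
  gbinom x m * gbinom x j =
  \sum_(j <= l < (m + j).+1) ('C(l, m) * 'C(m, l - j))%:Z * gbinom x l.
Proof.
rewrite -{2}[j]add0n big_addn -addSn addnK big_mkord (reindex_inj rev_ord_inj) /=.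
pose c u := if (u <= j)%N then gbinom m u * gbinom (x - m%:Z) (j - u) else 0.
have term (u : 'I_m.+1) :
    ('C(m.+1 - u.+1 + j, m) * 'C(m, m.+1 - u.+1 + j - j))%:Z
      * gbinom x (m.+1 - u.+1 + j) = gbinom x m * c u.
  have hu := ltn_ord u; rewrite ltnS in hu.
  rewrite /c subSS addnK bin_sub //; case: leqP => hj; last first.
    by rewrite bin_small ?mul0n ?mul0r ?mulr0 //; lia.
  have -> : (m - u + j = (j - u) + m)%N by lia.
  rewrite PoszM -{1}(@bin_sub (j - u + m) m) ?leq_addl // addnK.
  rewrite mulrAC -gbinom_trinomial; ring.
rewrite (eq_bigr _ (fun u _ => term u)) -mulr_sumr; congr (_ * _).
have := gbinom_vandermonde m%:Z (x - m%:Z) j; rewrite [m%:Z + _]addrC subrK => <-.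
transitivity (\sum_(u < (m + j).+1) c u).
  rewrite (@sum_ord_widen0 _ j.+1 (m + j).+1 c) ?ltnS ?leq_addl // => [|i /andP[h _]].
    by apply: eq_bigr => i _; rewrite /c -ltnS ltn_ord.
  by rewrite /c leqNgt h.
rewrite (@sum_ord_widen0 _ m.+1 (m + j).+1 c) ?ltnS ?leq_addr // => i /andP[h _].
by rewrite /c; case: ifP => // _; rewrite gbinom_nat bin_small ?mul0r.
Qed.

(** * Kostant's identity *)

Definition gbinomz (z k : int) : int := if k is Posz r then gbinom z r else 0.

Lemma gbinomz_nat z (r : nat) : gbinomz z r%:Z = gbinom z r. Proof. by []. Qed.
Lemma gbinomz0 z : gbinomz z 0 = 1. Proof. exact: gbinom0. Qed.
Lemma gbinomz_neg z k : k < 0 -> gbinomz z k = 0. Proof. by case: k. Qed.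

Lemma gbinomzS z k : gbinomz (z + 1) k = gbinomz z k + gbinomz z (k - 1).
Proof.
case: k => [[|r]|n].
- by rewrite !gbinomz0 gbinomz_neg ?addr0.
- by rewrite -[in _ - 1]addn1 PoszD addrK; exact: gbinomS.
- by rewrite !gbinomz_neg ?addr0 // NegzE; lia.
Qed.

Lemma mul_gbinomz_left z k : k * gbinomz z k = (z - k + 1) * gbinomz z (k - 1).
Proof.
case: k => [[|r]|n].
- by rewrite mul0r gbinomz_neg ?mulr0.
- rewrite -[in _ - 1]addn1 PoszD addrK !gbinomz_nat mul_gbinom_left -addn1 PoszD.
  by congr (_ * _); ring.
- by rewrite !gbinomz_neg ?mulr0 // NegzE; lia.
Qed.

Section Kostant.
Variables (x i : int).

Definition kostant_term (r t : int) :=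
  gbinomz (x + r - t) (i - t) * gbinomz (2 * x + r - i) t * gbinomz (- x) (r - t).

(* Pascal's rule in [r] splits the terms into these two pieces (kostant_term_split,
   kostant_term_succ), after which the sum over [t] telescopes. *)
Definition kostant_partA (r t : int) :=
  gbinomz (x + r + 1 - t) (i - t) * ((r + 1 - t) * gbinomz (- x) (r + 1 - t))
  * gbinomz (2 * x + r - i) t.
Definition kostant_partB (r t : int) :=
  gbinomz (x + r - t) (i - t - 1) * (2 * x + 2 * r + 1 - i - t)
  * gbinomz (2 * x + r - i) t * gbinomz (- x) (r - t).

Lemma kostant_term_split r t :
  (i - x - r) * kostant_term r t = kostant_partA r t + kostant_partB r t.
Proof.
rewrite /kostant_term /kostant_partA /kostant_partB.
have h1 := gbinomzS (x + r - t) (i - t).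
have h2 := mul_gbinomz_left (x + r - t) (i - t).
have h3 := mul_gbinomz_left (- x) (r + 1 - t).
have -> : x + r + 1 - t = x + r - t + 1 by ring.
rewrite (_ : r + 1 - t - 1 = r - t) in h3; last by ring.
rewrite h1 h3.
by apply: (eq_of_relation h2 (c := gbinomz (2 * x + r - i) t * gbinomz (- x) (r - t))); ring.
Qed.

Lemma kostant_term_succ r t :
  (r + 1) * kostant_term (r + 1) (t + 1) = kostant_partA r (t + 1) + kostant_partB r t.
Proof.
rewrite /kostant_term /kostant_partA /kostant_partB.
have -> : x + (r + 1) - (t + 1) = x + r - t by ring.
have -> : x + r + 1 - (t + 1) = x + r - t by ring.
have -> : i - (t + 1) = i - t - 1 by ring.
have -> : (r + 1) - (t + 1) = r - t by ring.
have -> : 2 * x + (r + 1) - i = (2 * x + r - i) + 1 by ring.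
have h1 := gbinomzS (2 * x + r - i) (t + 1).
have h2 := mul_gbinomz_left (2 * x + r - i) (t + 1).
rewrite addrK in h1 h2; rewrite h1.
by apply: (eq_of_relation h2 (c := gbinomz (x + r - t) (i - t - 1) * gbinomz (- x) (r - t))); ring.
Qed.

Lemma kostant_term_succ0 r : (r + 1) * kostant_term (r + 1) 0 = kostant_partA r 0.
Proof. by rewrite /kostant_term /kostant_partA !subr0 !gbinomz0 addrA; ring. Qed.

Lemma kostant_partA_last r : kostant_partA r (r + 1) = 0.
Proof. by rewrite /kostant_partA subrr mul0r mulr0 mul0r. Qed.

Lemma kostant_gbinomz (r : nat) :
  gbinomz x i * gbinomz (i - x) r%:Z = \sum_(t < r.+1) kostant_term r%:Z t%:Z.
Proof.
elim: r => [|r IH]; first by rewrite big_ord1 /kostant_term !subr0 !gbinomz0 !mulr1.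
have rS : (r.+1)%:Z = r%:Z + 1 by rewrite -addn1.
apply: (@mulfI _ (r%:Z + 1)); first by rewrite -rS.
have shift (f : int -> int) :
    \sum_(t < r.+2) f t%:Z = f 0 + \sum_(t < r.+1) f (t%:Z + 1).
  by rewrite big_ord_recl; congr (_ + _); apply: eq_bigr => t _; rewrite lift0 -addn1.
rewrite rS mulrCA.
have -> : (r%:Z + 1) * gbinomz (i - x) (r%:Z + 1) = (i - x - r%:Z) * gbinomz (i - x) r%:Z.
  by rewrite mul_gbinomz_left addrK; congr (_ * _); ring.
rewrite mulrCA IH !mulr_sumr (eq_bigr _ (fun t _ => kostant_term_split _ _)) big_split /=.
rewrite (shift (fun t => (r%:Z + 1) * kostant_term (r%:Z + 1) t)) kostant_term_succ0.
rewrite (eq_bigr _ (fun t _ => kostant_term_succ _ _)) big_split /= addrA.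
rewrite -(shift (kostant_partA r%:Z)) [in RHS]big_ord_recr /= rS.
by rewrite kostant_partA_last addr0.
Qed.

End Kostant.

Lemma gbinom_kostant (x : int) (n i : nat) :
  gbinom x i * gbinom (i%:Z - x) n =
  \sum_(t < (minn n i).+1)
     gbinom (x + (n - t)%N%:Z) (i - t) * gbinom (2 * x + n%:Z - i%:Z) t
     * gbinom (- x) (n - t).
Proof.
rewrite -!gbinomz_nat kostant_gbinomz.
rewrite (@sum_ord_widen0 _ (minn n i).+1 n.+1 (fun t => kostant_term x i n t)); last 2 first.
- by rewrite ltnS geq_minl.
- move=> t /andP[h1 h2]; rewrite /kostant_term (@gbinomz_neg _ (i%:Z - t%:Z)) ?mul0r //.
  by move: h1 h2; rewrite ltnS /minn; case: ifP => h h1 h2; lia.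
apply: eq_bigr => t _.
have /andP[hn hi] : (t <= n)%N && (t <= i)%N by rewrite -leq_min -ltnS ltn_ord.
by rewrite /kostant_term -addrA !subzn.
Qed.

(** * Weighted shifts of the affine Lie algebra *)

Lemma eq_big_uniq_vanish (T : eqType) (V : nmodType) (s1 s2 : seq T) (f : T -> V) :
  uniq s1 -> uniq s2 ->
  (forall x, x \notin s1 -> f x = 0) -> (forall x, x \notin s2 -> f x = 0) ->
  \sum_(x <- s1) f x = \sum_(x <- s2) f x.
Proof.
move=> u1 u2 f1 f2.
rewrite (bigID (mem s2)) [in RHS](bigID (mem s1)) /=.
rewrite [X in _ + X]big1 => [|x /f2 //].
rewrite [X in _ = _ + X]big1 => [|x /f1 //].
rewrite !addr0 -[LHS]big_filter -[RHS]big_filter; apply/perm_big/uniq_perm.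
- exact: filter_uniq.
- exact: filter_uniq.
- by move=> x; rewrite !mem_filter andbC.
Qed.

Lemma sum_mulrn_eq_uniq (T : eqType) (V : nmodType) (s : seq T) (f : T -> V) a :
  uniq s -> \sum_(x <- s) f x *+ (x == a) = if a \in s then f a else 0.
Proof.
move=> us; rewrite (eq_bigr (fun x => if x == a then f x else 0)); last first.
  by move=> x _; case: (x == a); rewrite ?mulr1n.
rewrite -big_mkcond /= -big_filter; case: ifP => sa.
  by rewrite filter_pred1_uniq // big_seq1.
rewrite big_seq big1 // => x; rewrite mem_filter => /andP[/eqP -> h].
by rewrite h in sa.
Qed.

Section WeightedShift.
Variables (F : fieldType) (g : lmodType F).
Local Notation ghat := (ghat g).

Lemma ghat_ext (u v : ghat) : (forall p, u.1@_p = v.1@_p) -> u.2 = v.2 -> u = v.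
Proof. by case: u v => [x a] [y b] /= h ->; congr pair; apply/malgP. Qed.

Lemma mcoeff_sum_shift (x : loopg g) (G : int -> g -> g) (d p : int) :
  (forall n, G n 0 = 0) ->
  (\sum_(n <- msupp x) << G n x@_n *g (n + d) >>)@_p = G (p - d) x@_(p - d).
Proof.
move=> G0; rewrite (big_morph (mcoeff p) (mcoeffD p) (mcoeff0 p)).
under eq_bigr => n _ do rewrite mcoeffU (can2_eq (addrK d) (subrK d)).
by rewrite sum_mulrn_eq_uniq //; case: msuppP; rewrite ?G0.
Qed.

Lemma ghat_coefD (u v : ghat) p : (u + v).1@_p = u.1@_p + v.1@_p.
Proof. exact: mcoeffD. Qed.

Lemma ghat_coef0 p : (0 : ghat).1@_p = 0.
Proof. exact: mcoeff0. Qed.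

Lemma ghat_coef_sum (I : Type) (r : seq I) (P : pred I) (U : I -> ghat) p :
  (\sum_(i <- r | P i) U i).1@_p = \sum_(i <- r | P i) (U i).1@_p.
Proof. by apply: (big_morph (fun u : ghat => u.1@_p)) => [u v|]; rewrite ?ghat_coefD ?ghat_coef0. Qed.

Lemma ghat_kcoef_sum (I : Type) (r : seq I) (P : pred I) (U : I -> ghat) :
  (\sum_(i <- r | P i) U i).2 = \sum_(i <- r | P i) (U i).2.
Proof. exact: (big_morph (fun u : ghat => u.2)). Qed.

Lemma ghat_coefZ (c : F) (u : ghat) p : (ghat_scale c u).1@_p = c *: u.1@_p.
Proof.
rewrite /= /loop_scale (big_morph (mcoeff p) (mcoeffD p) (mcoeff0 p)).
under eq_bigr => n _ do rewrite mcoeffU.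
by rewrite sum_mulrn_eq_uniq //; case: msuppP; rewrite ?scaler0.
Qed.

Lemma ghat_scalerDr (c : F) (u v : ghat) :
  ghat_scale c (u + v) = ghat_scale c u + ghat_scale c v.
Proof.
apply: ghat_ext => [p|]; last exact: mulrDr.
by rewrite ghat_coefD !ghat_coefZ ghat_coefD scalerDr.
Qed.

Lemma ghat_scaler0 (c : F) : ghat_scale c (0 : ghat) = 0.
Proof. by apply: ghat_ext => [p|]; rewrite ?ghat_coefZ ?ghat_coef0 ?scaler0 //= mulr0. Qed.

Lemma ghat_scalerA (a b : F) (u : ghat) :
  ghat_scale a (ghat_scale b u) = ghat_scale (a * b) u.
Proof. by apply: ghat_ext => [p|]; rewrite ?ghat_coefZ ?scalerA //= mulrA. Qed.

Lemma ghat_scale1r (u : ghat) : ghat_scale 1 u = u.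
Proof. by apply: ghat_ext => [p|]; rewrite ?ghat_coefZ ?scale1r //= mul1r. Qed.

Lemma ghat_scalerDl (a b : F) (u : ghat) :
  ghat_scale (a + b) u = ghat_scale a u + ghat_scale b u.
Proof.
apply: ghat_ext => [p|]; last exact: mulrDl.
by rewrite ghat_coefD !ghat_coefZ scalerDl.
Qed.

Lemma ghat_scale0r (u : ghat) : ghat_scale 0 u = 0.
Proof. by apply: ghat_ext => [p|]; rewrite ?ghat_coefZ ?ghat_coef0 ?scale0r //= mul0r. Qed.

(* [k] is weighted like [t^0] but not moved. *)
Definition wshift (phi : int -> F) (d : int) (u : ghat) : ghat :=
  (\sum_(n <- msupp u.1) << phi n *: u.1@_n *g (n + d) >>, phi 0 * u.2).

Lemma ghat_coef_wshift phi d u p : (wshift phi d u).1@_p = phi (p - d) *: u.1@_(p - d).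
Proof.
by rewrite /= (@mcoeff_sum_shift u.1 (fun n a => phi n *: a)) // => n; rewrite scaler0.
Qed.

Lemma wshiftD phi d (u v : ghat) : wshift phi d (u + v) = wshift phi d u + wshift phi d v.
Proof.
apply: ghat_ext => [p|]; last exact: mulrDr.
by rewrite ghat_coefD !ghat_coef_wshift ghat_coefD scalerDr.
Qed.

Lemma wshift0 phi d : wshift phi d 0 = 0.
Proof.
by apply: ghat_ext => [p|]; rewrite ?ghat_coef_wshift ?ghat_coef0 ?scaler0 //= mulr0.
Qed.

Lemma wshiftZ phi d c u : wshift phi d (ghat_scale c u) = ghat_scale c (wshift phi d u).
Proof.
apply: ghat_ext => [p|]; last exact: mulrCA.
by rewrite ghat_coef_wshift !ghat_coefZ ghat_coef_wshift !scalerA mulrC.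
Qed.

(* [wshift phi d] is then homogeneous of degree [d] when [k] has degree [0]. *)
Definition k_homogeneous (phi : int -> F) (d : int) := d != 0 -> phi 0 = 0.

Lemma k_homogeneous_comp phi d psi d' :
  k_homogeneous phi d -> k_homogeneous psi d' ->
  k_homogeneous (fun n => phi (n + d') * psi n) (d + d').
Proof.
move=> hphi hpsi; rewrite /k_homogeneous add0r.
have [-> | /hpsi -> _] := eqVneq d' 0; last by rewrite mulr0.
by rewrite addr0 => /hphi ->; rewrite mul0r.
Qed.

Lemma k_homogeneous_sum (I : Type) (s : seq I) (c : I -> F) phi d :
  (forall t, k_homogeneous (phi t) d) ->
  k_homogeneous (fun n => \sum_(t <- s) c t * phi t n) d.
Proof. by move=> h nz; apply: big1 => t _; rewrite (h t nz) mulr0. Qed.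

Lemma wshift_comp phi d psi d' (u : ghat) : k_homogeneous psi d' ->
  wshift phi d (wshift psi d' u) = wshift (fun n => phi (n + d') * psi n) (d + d') u.
Proof.
move=> hpsi; apply: ghat_ext => [p|]; last first.
  rewrite /= add0r mulrA; have [-> | /hpsi ->] := eqVneq d' 0; first by [].
  by rewrite !mulr0 !mul0r.
by rewrite !ghat_coef_wshift scalerA opprD addrA subrK.
Qed.

Lemma eq_wshift phi psi d (u : ghat) : phi =1 psi -> wshift phi d u = wshift psi d u.
Proof.
by move=> e; apply: ghat_ext => [p|]; rewrite ?ghat_coef_wshift /= e.
Qed.

Lemma ghat_scale_wshift c phi d (u : ghat) :
  ghat_scale c (wshift phi d u) = wshift (fun n => c * phi n) d u.
Proof.
apply: ghat_ext => [p|]; last exact: mulrA.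
by rewrite ghat_coefZ !ghat_coef_wshift scalerA.
Qed.

Lemma sum_wshift (I : Type) (s : seq I) (c : I -> F) phi d (u : ghat) :
  \sum_(t <- s) ghat_scale (c t) (wshift (phi t) d u)
  = wshift (fun n => \sum_(t <- s) c t * phi t n) d u.
Proof.
apply: ghat_ext => [p|].
  rewrite ghat_coef_sum ghat_coef_wshift scaler_suml; apply: eq_bigr => t _.
  by rewrite ghat_coefZ ghat_coef_wshift scalerA.
by rewrite ghat_kcoef_sum /= mulr_suml; apply: eq_bigr => t _; rewrite /= mulrA.
Qed.

Lemma wshift_id phi (u : ghat) : (forall n, phi n = 1) -> wshift phi 0 u = u.
Proof.
move=> h; apply: ghat_ext => [p|]; last by rewrite /= h mul1r.
by rewrite ghat_coef_wshift subr0 h scale1r.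
Qed.

Lemma wshift_tn phi d (a : g) n : wshift phi d (tn a n) = tn (phi n *: a) (n + d).
Proof.
apply: ghat_ext => [p|]; last by rewrite /= !mulr0.
rewrite ghat_coef_wshift /= !mcoeffU (can2_eq (addrK d) (subrK d)) eq_sym.
by case: eqP => [->|]; rewrite ?scaler0.
Qed.

Lemma wshift_kc phi d : wshift phi d (kc g) = (0, phi 0).
Proof.
apply: ghat_ext => [p|]; last exact: mulr1.
by rewrite ghat_coef_wshift /= !mcoeff0 scaler0.
Qed.

End WeightedShift.

(** * Higher derivations of the bracket *)

Lemma double_eq0 (V : zmodType) (x : V) : x + x = x -> x = 0.
Proof. by move/eqP; rewrite -subr_eq0 addrK => /eqP. Qed.

Definition higher_derivation (V : nmodType) (b : V -> V -> V) (D : nat -> V -> V) :=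
  forall r u v, D r (b u v) = \sum_(r1 < r.+1) b (D r1 u) (D (r - r1)%N v).

Lemma higher_derivation_comp3 (V : nmodType) (b : V -> V -> V) (A B C : nat -> V -> V) :
  higher_derivation b A -> higher_derivation b B -> higher_derivation b C ->
  (forall r, {morph A r : x y / x + y}) -> (forall r, A r 0 = 0) ->
  (forall r, {morph B r : x y / x + y}) -> (forall r, B r 0 = 0) ->
  forall i j k u v, A i (B j (C k (b u v))) =
  \sum_(i1 < i.+1) \sum_(j1 < j.+1) \sum_(k1 < k.+1)
     b (A i1 (B j1 (C k1 u))) (A (i - i1)%N (B (j - j1)%N (C (k - k1)%N v))).
Proof.
move=> hA hB hC AD A0 BD B0 i j k u v.
rewrite hC (big_morph _ (BD j) (B0 j)) (big_morph _ (AD i) (A0 i)).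
under eq_bigr => k1 _ do rewrite hB (big_morph _ (AD i) (A0 i)).
under eq_bigr => k1 _ do under eq_bigr => j1 _ do rewrite hA.
under eq_bigr => k1 _ do rewrite exchange_big.
by rewrite exchange_big; apply: eq_bigr => i1 _; rewrite exchange_big.
Qed.

Section AffineBracket.
Variables (F : fieldType) (g : lmodType F).
Local Notation ghat := (ghat g).
Variables (br : g -> g -> g) (form : g -> g -> F).
Hypothesis lie_g : is_lie_bracket br.
Hypothesis form_g : is_sym_inv_form br form.
Local Notation ghat_br := (ghat_br br form).

Lemma br0l b : br 0 b = 0.
Proof. by case: lie_g => h _ _ _; apply: double_eq0; have := h 1 0 0 b; rewrite !scale1r addr0. Qed.

Lemma br0r b : br b 0 = 0.
Proof. by case: lie_g => _ h _ _; apply: double_eq0; have := h 1 0 0 b; rewrite !scale1r addr0. Qed.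

Lemma brZl c a b : br (c *: a) b = c *: br a b.
Proof. by case: lie_g => h _ _ _; have := h c a 0 b; rewrite addr0 br0l addr0. Qed.

Lemma brZr c a b : br b (c *: a) = c *: br b a.
Proof. by case: lie_g => _ h _ _; have := h c a 0 b; rewrite addr0 br0r addr0. Qed.

Lemma form0l b : form 0 b = 0.
Proof. by case: form_g => h _ _; apply: double_eq0; have := h 1 0 0 b; rewrite scale1r addr0 mul1r. Qed.

Lemma formZl c a b : form (c *: a) b = c * form a b.
Proof. by case: form_g => h _ _; have := h c a 0 b; rewrite addr0 form0l addr0. Qed.

Lemma formZr c a b : form b (c *: a) = c * form b a.
Proof. by case: form_g => _ h _; rewrite h formZl h. Qed.

Lemma ghat_coef_br (u v : ghat) p :
  (ghat_br u v).1@_p = \sum_(m <- msupp u.1) br u.1@_m v.1@_(p - m).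
Proof.
rewrite /= (big_morph (mcoeff p) (mcoeffD p) (mcoeff0 p)); apply: eq_bigr => m _.
under eq_bigr => n _ do rewrite (addrC m).
by rewrite (@mcoeff_sum_shift _ _ v.1 (fun _ a => br u.1@_m a)) // => n; rewrite br0r.
Qed.

Lemma sum_msupp_wshift (V : nmodType) phi d (u : ghat) (G : int -> g -> V) :
  (forall m, G m 0 = 0) ->
  \sum_(m <- msupp (wshift phi d u).1) G m (wshift phi d u).1@_m
  = \sum_(m <- msupp u.1) G (m + d) (phi m *: u.1@_m).
Proof.
move=> G0; rewrite (@eq_big_uniq_vanish _ _ _ [seq m + d | m <- msupp u.1]).
- by rewrite big_map; apply: eq_bigr => m _; rewrite ghat_coef_wshift addrK.
- exact: fset_uniq.
- by rewrite map_inj_uniq ?fset_uniq //; exact: addIr.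
- by move=> x /mcoeff_outdom ->; rewrite G0.
move=> x hx; rewrite ghat_coef_wshift mcoeff_outdom ?scaler0 ?G0 //.
by apply: contra hx => h; apply/mapP; exists (x - d); rewrite ?subrK.
Qed.

Section WeightedHigherDerivation.
Variables (phi : nat -> int -> F) (d : nat -> int).
Hypothesis d_add : forall r r1, (r1 <= r)%N -> d r1 + d (r - r1)%N = d r.
Hypothesis phi_add : forall r x y,
  phi r (x + y) = \sum_(r1 < r.+1) phi r1 x * phi (r - r1)%N y.
(* The Leibniz rule for the cocycle [m <a, b> delta_(m + n, 0) k]. *)
Hypothesis phi_cocycle : forall r m,
  \sum_(r1 < r.+1) (m + d r1)%:~R * (phi r1 m * phi (r - r1)%N (- m - d r))
  = phi r 0 * m%:~R.
Hypothesis phi_k : forall r, k_homogeneous (phi r) (d r).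

Local Notation D r := (wshift (phi r) (d r)).

Lemma ghat_coef_wshift_br r u v p :
  (D r (ghat_br u v)).1@_p = (\sum_(r1 < r.+1) ghat_br (D r1 u) (D (r - r1)%N v)).1@_p.
Proof.
rewrite ghat_coef_wshift ghat_coef_br ghat_coef_sum.
under [RHS]eq_bigr => r1 _.
  rewrite ghat_coef_br (@sum_msupp_wshift _ _ _ u
    (fun m a => br a (D (r - r1)%N v).1@_(p - m))); last by move=> m; rewrite br0l.
  under eq_bigr => m _.
    rewrite ghat_coef_wshift brZl brZr scalerA.
    have -> : p - (m + d r1) - d (r - r1)%N = p - d r - m.
      by rewrite -(d_add (ltnSE (ltn_ord r1))); ring.
    over.
  over.
rewrite exchange_big /= scaler_sumr; apply: eq_bigr => m _.
by rewrite -scaler_suml -phi_add; congr (phi _ _ *: _); ring.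
Qed.

Lemma ghat_kcoef_wshift_br r u v :
  (D r (ghat_br u v)).2 = (\sum_(r1 < r.+1) ghat_br (D r1 u) (D (r - r1)%N v)).2.
Proof.
rewrite /= mulr_sumr ghat_kcoef_sum.
under [RHS]eq_bigr => r1 _.
  rewrite /= (@sum_msupp_wshift _ _ _ u
    (fun m a => m%:~R * form a (D (r - r1)%N v).1@_(- m))); last first.
    by move=> m; rewrite form0l mulr0.
  under eq_bigr => m _.
    rewrite ghat_coef_wshift formZl formZr.
    have -> : - (m + d r1) - d (r - r1)%N = - m - d r.
      by rewrite -(d_add (ltnSE (ltn_ord r1))); ring.
    over.
  over.
rewrite exchange_big /=; apply: eq_bigr => m _.
rewrite (eq_bigr (fun r1 : 'I_r.+1 => (m + d r1)%:~R * (phi r1 m *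
  phi (r - r1)%N (- m - d r)) * form u.1@_m v.1@_(- m - d r))) => [|r1 _]; last first.
  by rewrite !mulrA.
rewrite -mulr_suml phi_cocycle mulrA.
by have [-> | /phi_k ->] := eqVneq (d r) 0; rewrite ?subr0 ?mul0r.
Qed.

Lemma wshift_higher_derivation : higher_derivation ghat_br (fun r => D r).
Proof.
move=> r u v; apply: ghat_ext; [exact: ghat_coef_wshift_br | exact: ghat_kcoef_wshift_br].
Qed.

End WeightedHigherDerivation.

End AffineBracket.

(** * The operators of the divided powers *)

Section SL2Operators.
Variables (F : fieldType) (g : lmodType F).
Local Notation ghat := (ghat g).

Definition Lm_weight (r : nat) (n : int) : F := ((-1) ^+ r * gbinom n r)%:~R.
Definition Lp_weight (r : nat) (n : int) : F := (gbinom (- n) r)%:~R.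
Definition L0_weight (r : nat) (n : int) : F := (gbinom (2%:Z * n) r)%:~R.

Lemma Lm_weight_k r : k_homogeneous (Lm_weight r) (- r%:Z).
Proof. by case: r => // r _; rewrite /Lm_weight gbinom0l mulr0. Qed.

Lemma Lp_weight_k r : k_homogeneous (Lp_weight r) r%:Z.
Proof. by case: r => // r _; rewrite /Lp_weight oppr0 gbinom0l. Qed.

Lemma L0_weight_k r : k_homogeneous (L0_weight r) 0.
Proof. by rewrite /k_homogeneous eqxx. Qed.

Lemma Lm_weightD r x y :
  Lm_weight r (x + y) = \sum_(r1 < r.+1) Lm_weight r1 x * Lm_weight (r - r1)%N y.
Proof.
rewrite /Lm_weight; under eq_bigr => r1 _ do rewrite -intrM.
rewrite -rmorph_sum; congr intmul; rewrite -gbinom_vandermonde mulr_sumr.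
by apply: eq_bigr => r1 _; rewrite (expr_subnKC _ (ltnSE (ltn_ord r1))); ring.
Qed.

Lemma Lp_weightD r x y :
  Lp_weight r (x + y) = \sum_(r1 < r.+1) Lp_weight r1 x * Lp_weight (r - r1)%N y.
Proof.
rewrite /Lp_weight; under eq_bigr => r1 _ do rewrite -intrM.
by rewrite -rmorph_sum opprD gbinom_vandermonde.
Qed.

Lemma L0_weightD r x y :
  L0_weight r (x + y) = \sum_(r1 < r.+1) L0_weight r1 x * L0_weight (r - r1)%N y.
Proof.
rewrite /L0_weight; under eq_bigr => r1 _ do rewrite -intrM.
by rewrite -rmorph_sum mulrDr gbinom_vandermonde.
Qed.

Lemma Lm_weight_cocycle r m :
  \sum_(r1 < r.+1) (m - r1%:Z)%:~R * (Lm_weight r1 m * Lm_weight (r - r1)%N (- m + r%:Z))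
  = Lm_weight r 0 * m%:~R.
Proof.
rewrite /Lm_weight -intrM; under eq_bigr => r1 _ do rewrite -!intrM.
rewrite -rmorph_sum; congr intmul.
rewrite (eq_bigr (fun r1 : 'I_r.+1 => (-1) ^+ r * m *
   (gbinom (m - 1) r1 * gbinom (r%:Z - m) (r - r1)))) => [|r1 _].
  rewrite -mulr_sumr gbinom_vandermonde (_ : m - 1 + (r%:Z - m) = r%:Z - 1); last by ring.
  by rewrite gbinom_predn gbinom0l mulrAC.
rewrite (expr_subnKC _ (ltnSE (ltn_ord r1))) (addrC (- m)).
apply: (eq_of_relation (gbinom_absorption m r1)
  (c := (-1) ^+ r1 * (-1) ^+ (r - r1) * gbinom (r%:Z - m) (r - r1))).
ring.
Qed.

Lemma Lp_weight_cocycle r m :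
  \sum_(r1 < r.+1) (m + r1%:Z)%:~R * (Lp_weight r1 m * Lp_weight (r - r1)%N (- m - r%:Z))
  = Lp_weight r 0 * m%:~R.
Proof.
rewrite /Lp_weight -intrM; under eq_bigr => r1 _ do rewrite -!intrM.
rewrite -rmorph_sum; congr intmul.
rewrite (eq_bigr (fun r1 : 'I_r.+1 => m *
   (gbinom (- m - 1) r1 * gbinom (m + r%:Z) (r - r1)))) => [|r1 _].
  rewrite -mulr_sumr gbinom_vandermonde (_ : - m - 1 + (m + r%:Z) = r%:Z - 1); last by ring.
  by rewrite gbinom_predn oppr0 gbinom0l mulrC.
rewrite (_ : - (- m - r%:Z) = m + r%:Z); last by ring.
apply: (eq_of_relation (gbinom_absorption (- m) r1) (c := - gbinom (m + r%:Z) (r - r1))).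
ring.
Qed.

Lemma L0_weight_cocycle r m :
  \sum_(r1 < r.+1) m%:~R * (L0_weight r1 m * L0_weight (r - r1)%N (- m))
  = L0_weight r 0 * m%:~R.
Proof.
by rewrite -mulr_sumr -L0_weightD addrN mulrC /L0_weight mulr0.
Qed.

Definition Lm_op r : ghat -> ghat := wshift (Lm_weight r) (- r%:Z).
Definition Lp_op r : ghat -> ghat := wshift (Lp_weight r) r%:Z.
Definition L0_op r : ghat -> ghat := wshift (L0_weight r) 0.
Definition PBW_op i j k (u : ghat) := Lm_op i (L0_op j (Lp_op k u)).

Lemma Lm_op0 (u : ghat) : Lm_op 0 u = u.
Proof. by apply: wshift_id => n; rewrite /Lm_weight gbinom0 expr0 mulr1. Qed.

Lemma Lp_op0 (u : ghat) : Lp_op 0 u = u.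
Proof. by apply: wshift_id => n; rewrite /Lp_weight gbinom0. Qed.

Lemma L0_op0 (u : ghat) : L0_op 0 u = u.
Proof. by apply: wshift_id => n; rewrite /L0_weight gbinom0. Qed.

Lemma Lm_op_kc r : Lm_op r (kc g) = if r == 0%N then kc g else 0.
Proof. by rewrite /Lm_op wshift_kc /Lm_weight gbinom0l; case: r => [|r]; rewrite ?mulr0. Qed.

Lemma Lp_op_kc r : Lp_op r (kc g) = if r == 0%N then kc g else 0.
Proof. by rewrite /Lp_op wshift_kc /Lp_weight oppr0 gbinom0l; case: r. Qed.

Lemma L0_op_kc r : L0_op r (kc g) = if r == 0%N then kc g else 0.
Proof. by rewrite /L0_op wshift_kc /L0_weight mulr0 gbinom0l; case: r. Qed.

Lemma Lm_op_mul a b (u : ghat) :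
  Lm_op a (Lm_op b u) = ghat_scale ('C(a + b, a))%:R (Lm_op (a + b) u).
Proof.
rewrite /Lm_op (wshift_comp _ _ _ (@Lm_weight_k _)) ghat_scale_wshift -opprD -PoszD.
apply: eq_wshift => n; rewrite /Lm_weight -[_%:R]/((_%:Z)%:~R) -!intrM; congr intmul.
apply: (eq_of_relation (gbinom_trinomial n a b) (c := (-1) ^+ a * (-1) ^+ b)).
by rewrite exprD; ring.
Qed.

Lemma Lp_op_mul a b (u : ghat) :
  Lp_op a (Lp_op b u) = ghat_scale ('C(a + b, a))%:R (Lp_op (a + b) u).
Proof.
rewrite /Lp_op (wshift_comp _ _ _ (@Lp_weight_k _)) ghat_scale_wshift -PoszD.
apply: eq_wshift => n; rewrite /Lp_weight -[_%:R]/((_%:Z)%:~R) -!intrM; congr intmul.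
by rewrite opprD gbinom_trinomial.
Qed.

Lemma L0_op_mul m j (u : ghat) :
  L0_op m (L0_op j u) = \sum_(j <= l < (m + j).+1)
     ghat_scale (('C(l, m) * 'C(m, l - j))%:R) (L0_op l u).
Proof.
rewrite /L0_op (wshift_comp _ _ _ (@L0_weight_k _)) sum_wshift addr0.
apply: eq_wshift => n; rewrite /L0_weight addr0 -intrM gbinom_mul_sum rmorph_sum.
by apply: eq_bigr => l _; rewrite rmorphM.
Qed.

Lemma L0_Lm_op r i (u : ghat) :
  L0_op r (Lm_op i u) = \sum_(m < r.+1)
     ghat_scale (gbinom (- (2 * i)%:Z) (r - m))%:~R (Lm_op i (L0_op m u)).
Proof.
rewrite /L0_op /Lm_op (wshift_comp _ _ _ (@Lm_weight_k _)).
under eq_bigr => m _ do rewrite (wshift_comp _ _ _ (@L0_weight_k _)).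
rewrite sum_wshift add0r addr0; apply: eq_wshift => n.
rewrite /L0_weight /Lm_weight -intrM.
under eq_bigr => m _ do rewrite -!intrM.
rewrite -rmorph_sum; congr intmul.
under eq_bigr => m _ do rewrite mulrCA.
rewrite -mulr_sumr gbinom_vandermonde_rev addr0 mulrC PoszM; congr (_ * gbinom _ _).
by ring.
Qed.

Lemma Lp_L0_op k n (u : ghat) :
  Lp_op k (L0_op n u) = \sum_(m < n.+1)
     ghat_scale (gbinom (- (2 * k)%:Z) (n - m))%:~R (L0_op m (Lp_op k u)).
Proof.
rewrite /L0_op /Lp_op (wshift_comp _ _ _ (@L0_weight_k _)).
under eq_bigr => m _ do rewrite (wshift_comp _ _ _ (@Lp_weight_k _)).
rewrite sum_wshift add0r addr0; apply: eq_wshift => x.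
rewrite /L0_weight /Lp_weight -intrM.
under eq_bigr => m _ do rewrite -!intrM.
rewrite -rmorph_sum; congr intmul.
rewrite (eq_bigr (fun m : 'I_n.+1 => gbinom (- x) k *
  (gbinom (- (2 * k)%:Z) (n - m) * gbinom (2%:Z * (x + k%:Z)) m))) => [|m _]; last by ring.
rewrite -mulr_sumr gbinom_vandermonde_rev addr0 PoszM; congr (_ * gbinom _ _).
by ring.
Qed.

Lemma Lp_Lm_op n i (u : ghat) :
  Lp_op n (Lm_op i u) = \sum_(t < (minn n i).+1) ghat_scale ((-1) ^+ t)
    (Lm_op (i - t) (\sum_(m < t.+1)
       ghat_scale (gbinom ((2 * t)%:Z - n%:Z - i%:Z) (t - m))%:~R
         (L0_op m (Lp_op (n - t) u)))).
Proof.
have bounds (t : 'I_(minn n i).+1) : (t <= n)%N && (t <= i)%N.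
  by rewrite -leq_min -ltnS ltn_ord.
have deg (t : 'I_(minn n i).+1) : - (i - t)%N%:Z + (0 + (n - t)%N%:Z) = n%:Z - i%:Z.
  by have /andP[tn ti] := bounds t; rewrite -!subzn //; ring.
rewrite /Lp_op /Lm_op /L0_op (wshift_comp _ _ _ (@Lm_weight_k _)).
under eq_bigr => t _.
  under eq_bigr => m _ do rewrite (wshift_comp _ _ _ (@Lp_weight_k _)).
  rewrite sum_wshift wshift_comp; last first.
    by apply: k_homogeneous_sum => m; apply: k_homogeneous_comp; [exact: L0_weight_k | exact: Lp_weight_k].
  rewrite deg.
  over.
rewrite sum_wshift; apply: eq_wshift => x.
rewrite /Lp_weight /Lm_weight /L0_weight -intrM.
under eq_bigr => t _.
  under eq_bigr => m _ do rewrite -!intrM.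
  rewrite -rmorph_sum -intrM -(rmorph_sign (intr : int -> F)) -intrM.
  over.
rewrite -rmorph_sum; congr intmul.
rewrite (eq_bigr (fun t : 'I_(minn n i).+1 => (-1) ^+ i *
   (gbinom (x + (n - t)%N%:Z) (i - t) * gbinom (2 * x + n%:Z - i%:Z) t
     * gbinom (- x) (n - t)))) => [|t _].
  by rewrite -mulr_sumr -gbinom_kostant opprB; ring.
have /andP[tn ti] := bounds t.
rewrite (eq_bigr (fun m : 'I_t.+1 => gbinom (- x) (n - t) *
   (gbinom ((2 * t)%N%:Z - n%:Z - i%:Z) (t - m)
     * gbinom (2%:Z * (x + (n - t)%N%:Z)) m))) => [|m _]; last by ring.
rewrite -mulr_sumr gbinom_vandermonde_rev add0r.
have -> : (2 * t)%N%:Z - n%:Z - i%:Z + 2%:Z * (x + (n - t)%N%:Z) = 2 * x + n%:Z - i%:Z.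
  by rewrite PoszM -subzn //; ring.
by rewrite (expr_subnKC _ ti); ring.
Qed.

End SL2Operators.

Section ModuleLieAlgebra.
Variables (F : fieldType) (g : lmodType F).
Variables (br : g -> g -> g) (form : g -> g -> F).
Hypothesis lie_g : is_lie_bracket br.
Hypothesis form_g : is_sym_inv_form br form.
Local Notation ghat_br := (ghat_br br form).

Lemma Lm_op_higher_derivation : higher_derivation ghat_br (@Lm_op F g).
Proof.
apply: (wshift_higher_derivation lie_g form_g (d := fun r => - r%:Z)).
- by move=> r r1 le; rewrite -opprD -PoszD subnKC.
- exact: Lm_weightD.
- by move=> r m; rewrite opprK; exact: Lm_weight_cocycle.
- exact: Lm_weight_k.
Qed.

Lemma Lp_op_higher_derivation : higher_derivation ghat_br (@Lp_op F g).
Proof.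
apply: (wshift_higher_derivation lie_g form_g (d := fun r => r%:Z)).
- by move=> r r1 le; rewrite -PoszD subnKC.
- exact: Lp_weightD.
- exact: Lp_weight_cocycle.
- exact: Lp_weight_k.
Qed.

Lemma L0_op_higher_derivation : higher_derivation ghat_br (@L0_op F g).
Proof.
apply: (wshift_higher_derivation lie_g form_g (d := fun r => 0)).
- by move=> r r1 le; rewrite addr0.
- exact: L0_weightD.
- by move=> r m; rewrite subr0; under eq_bigr do rewrite addr0; exact: L0_weight_cocycle.
- exact: L0_weight_k.
Qed.

Lemma PBW_op_br i j k (u v : ghat g) :
  PBW_op i j k (ghat_br u v) =
  \sum_(i1 < i.+1) \sum_(j1 < j.+1) \sum_(k1 < k.+1)
     ghat_br (PBW_op i1 j1 k1 u) (PBW_op (i - i1) (j - j1) (k - k1) v).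
Proof.
apply: (higher_derivation_comp3 Lm_op_higher_derivation L0_op_higher_derivation
  Lp_op_higher_derivation) => r *; [exact: wshiftD | exact: wshift0 | exact: wshiftD | exact: wshift0].
Qed.

End ModuleLieAlgebra.

(** * The action of the hyperalgebra *)

Definition sum3 (V : nmodType) (N : nat) (f : nat -> nat -> nat -> V) : V :=
  \sum_(i < N) \sum_(j < N) \sum_(k < N) f i j k.

Definition in_cube (N i j k : nat) := [&& (i < N)%N, (j < N)%N & (k < N)%N].

Lemma eq_sum3 (V : nmodType) N (f f' : nat -> nat -> nat -> V) :
  (forall i j k, in_cube N i j k -> f i j k = f' i j k) -> sum3 N f = sum3 N f'.
Proof.
move=> e; apply: eq_bigr => i _; apply: eq_bigr => j _; apply: eq_bigr => k _.
by rewrite e // /in_cube !ltn_ord.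
Qed.

Lemma sum3_widen (V : nmodType) (N L : nat) (f : nat -> nat -> nat -> V) :
  (N <= L)%N -> (forall i j k, ~~ in_cube N i j k -> f i j k = 0) ->
  sum3 L f = sum3 N f.
Proof.
move=> le f0.
rewrite /sum3 (@sum_ord_widen0 _ N L (fun i => \sum_(j < L) \sum_(k < L) f i j k)) //; last first.
  move=> i /andP[Ni _]; apply: big1 => j _; apply: big1 => k _.
  by rewrite f0 // /in_cube ltnNge Ni.
apply: eq_bigr => i _.
rewrite (@sum_ord_widen0 _ N L (fun j => \sum_(k < L) f i j k)) //; last first.
  by move=> j /andP[Nj _]; apply: big1 => k _; rewrite f0 // /in_cube ltn_ord ltnNge Nj.
apply: eq_bigr => j _; rewrite (@sum_ord_widen0 _ N L (f i j)) // => k /andP[Nk _].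
by rewrite f0 // /in_cube !ltn_ord ltnNge Nk.
Qed.

Lemma sum3_morph (V W : nmodType) (phi : V -> W) N (f : nat -> nat -> nat -> V) :
  {morph phi : x y / x + y} -> phi 0 = 0 ->
  phi (sum3 N f) = sum3 N (fun i j k => phi (f i j k)).
Proof.
move=> phiD phi0; rewrite /sum3 (big_morph phi phiD phi0); apply: eq_bigr => i _.
by rewrite (big_morph phi phiD phi0); apply: eq_bigr => j _; exact: big_morph.
Qed.

Lemma sum3D (V : nmodType) N (f f' : nat -> nat -> nat -> V) :
  sum3 N f + sum3 N f' = sum3 N (fun i j k => f i j k + f' i j k).
Proof.
rewrite -big_split; apply: eq_bigr => i _; rewrite -big_split.
by apply: eq_bigr => j _; rewrite -big_split.
Qed.

Lemma sum3B (V : zmodType) N (f f' : nat -> nat -> nat -> V) :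
  sum3 N f - sum3 N f' = sum3 N (fun i j k => f i j k - f' i j k).
Proof.
rewrite -sumrB; apply: eq_bigr => i _; rewrite -sumrB.
by apply: eq_bigr => j _; rewrite -sumrB.
Qed.

Lemma sum_ord_delta (V : nmodType) N i (f : nat -> V) :
  (i < N)%N -> \sum_(i' < N) f i' *+ (i' == i :> nat) = f i.
Proof.
move=> Ni; rewrite (bigD1 (Ordinal Ni)) //= eqxx big1 ?addr0 // => i' ne.
by have /negbTE-> : nat_of_ord i' != i by exact: ne.
Qed.

Lemma sum3_delta (V : nmodType) N i j k (f : nat -> nat -> nat -> V) : in_cube N i j k ->
  sum3 N (fun i' j' k' => f i' j' k' *+ [&& i' == i, j' == j & k' == k]) = f i j k.
Proof.
case/and3P=> Ni Nj Nk.
rewrite -[RHS](sum_ord_delta (fun i' => f i' j k) Ni); apply: eq_bigr => i' _.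
rewrite -(sum_ord_delta (fun j' => f i' j' k) Nj) -sumrMnl; apply: eq_bigr => j' _.
rewrite -(sum_ord_delta (f i' j') Nk) -!sumrMnl; apply: eq_bigr => k' _.
by rewrite -!mulrnA !mulnb; do !case: eqP.
Qed.

Section HyperalgebraAction.
Variables (F : fieldType) (H : algType F) (Lm L0 Lp : nat -> H).
Hypothesis hypH : is_hyperalgebra_sl2 Lm L0 Lp.
Variable g : lmodType F.
Local Notation ghat := (ghat g).
Local Notation PBW := (PBW Lm L0 Lp).

Lemma pbw_expansion (h : H) : {N : nat & {c : nat -> nat -> nat -> F |
  h = sum3 N (fun i j k => c i j k *: PBW i j k)}}.
Proof.
have [N /constructive_indefinite_description [c hc]] :=
  constructive_indefinite_description _ (hyp_span hypH h).
by exists N, c.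
Qed.

Definition pbw_bound (h : H) : nat := projT1 (pbw_expansion h).

Definition pbw_coord (h : H) (i j k : nat) : F :=
  if in_cube (pbw_bound h) i j k then sval (projT2 (pbw_expansion h)) i j k else 0.

Lemma pbw_coord_out h i j k : ~~ in_cube (pbw_bound h) i j k -> pbw_coord h i j k = 0.
Proof. by rewrite /pbw_coord => /negbTE->. Qed.

Lemma pbw_coordE h L : (pbw_bound h <= L)%N ->
  h = sum3 L (fun i j k => pbw_coord h i j k *: PBW i j k).
Proof.
move=> le; rewrite (sum3_widen le) => [|i j k /pbw_coord_out->]; last exact: scale0r.
rewrite {1}(svalP (projT2 (pbw_expansion h))) -/(pbw_bound h).
by apply: eq_sum3 => i j k N3; rewrite /pbw_coord N3.
Qed.

Lemma pbw_coord_unique h L (d : nat -> nat -> nat -> F) : (pbw_bound h <= L)%N ->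
  h = sum3 L (fun i j k => d i j k *: PBW i j k) ->
  forall i j k, in_cube L i j k -> pbw_coord h i j k = d i j k.
Proof.
move=> le hd i j k /and3P[Li Lj Lk]; apply/eqP; rewrite -subr_eq0; apply/eqP.
apply: (hyp_indep hypH (c := fun i j k => pbw_coord h i j k - d i j k)) Li Lj Lk.
rewrite -/(sum3 L (fun i j k => (pbw_coord h i j k - d i j k) *: PBW i j k)).
rewrite (eq_sum3 (f' := fun i j k => pbw_coord h i j k *: PBW i j k - d i j k *: PBW i j k));
  last by move=> *; rewrite scalerBl.
by rewrite -sum3B -(pbw_coordE le) -hd subrr.
Qed.

Definition hyper_act (h : H) (u : ghat) : ghat :=
  sum3 (pbw_bound h) (fun i j k => ghat_scale (pbw_coord h i j k) (PBW_op i j k u)).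

Lemma hyper_act_widen h L u : (pbw_bound h <= L)%N ->
  hyper_act h u = sum3 L (fun i j k => ghat_scale (pbw_coord h i j k) (PBW_op i j k u)).
Proof.
by move=> le; rewrite (sum3_widen le) // => i j k /pbw_coord_out->; rewrite ghat_scale0r.
Qed.

Lemma hyper_act_expansion h M (d : nat -> nat -> nat -> F) u :
  (forall i j k, ~~ in_cube M i j k -> d i j k = 0) ->
  h = sum3 M (fun i j k => d i j k *: PBW i j k) ->
  hyper_act h u = sum3 M (fun i j k => ghat_scale (d i j k) (PBW_op i j k u)).
Proof.
move=> d0 hd; set L := maxn (pbw_bound h) M.
have [hL ML] : (pbw_bound h <= L)%N /\ (M <= L)%N by rewrite leq_maxl leq_maxr.
have dL : h = sum3 L (fun i j k => d i j k *: PBW i j k).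
  by rewrite (sum3_widen ML) // => i j k /d0->; rewrite scale0r.
rewrite (hyper_act_widen _ hL) -(sum3_widen ML); last by move=> i j k /d0->; rewrite ghat_scale0r.
by apply: eq_sum3 => i j k L3; rewrite (pbw_coord_unique hL dL).
Qed.

Lemma hyper_act0 u : hyper_act 0 u = 0.
Proof. by rewrite (@hyper_act_expansion 0 0 (fun _ _ _ => 0)) // /sum3 big_ord0. Qed.

Lemma hyper_act_linear a h1 h2 u :
  hyper_act (a *: h1 + h2) u = ghat_scale a (hyper_act h1 u) + hyper_act h2 u.
Proof.
set L := maxn (pbw_bound h1) (pbw_bound h2).
have [l1 l2] : (pbw_bound h1 <= L)%N /\ (pbw_bound h2 <= L)%N by rewrite leq_maxl leq_maxr.
have out h (hL : (pbw_bound h <= L)%N) i j k : ~~ in_cube L i j k -> pbw_coord h i j k = 0.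
  move=> iL; apply: pbw_coord_out; apply: contra iL => /and3P[hi hj hk].
  by rewrite /in_cube !(leq_trans _ hL).
rewrite (@hyper_act_expansion _ L (fun i j k => a * pbw_coord h1 i j k + pbw_coord h2 i j k)).
- rewrite (hyper_act_widen u l1) (hyper_act_widen u l2).
  rewrite (sum3_morph _ _ (ghat_scalerDr a) (ghat_scaler0 _ a)) sum3D.
  by apply: eq_sum3 => i j k _; rewrite ghat_scalerDl ghat_scalerA.
- by move=> i j k iL; rewrite !out ?mulr0 ?addr0.
rewrite {1}(pbw_coordE l1) {1}(pbw_coordE l2) (sum3_morph _ _ (scalerDr a) (scaler0 _ a)).
by rewrite sum3D; apply: eq_sum3 => i j k _; rewrite scalerA scalerDl.
Qed.

Lemma hyper_actD h1 h2 u : hyper_act (h1 + h2) u = hyper_act h1 u + hyper_act h2 u.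
Proof. by rewrite -[h1]scale1r hyper_act_linear ghat_scale1r scale1r. Qed.

Lemma hyper_actZ a h u : hyper_act (a *: h) u = ghat_scale a (hyper_act h u).
Proof. by rewrite -[a *: h]addr0 hyper_act_linear hyper_act0 addr0. Qed.

Lemma hyper_act_sum (I : Type) (r : seq I) (P : pred I) (f : I -> H) u :
  hyper_act (\sum_(x <- r | P x) f x) u = \sum_(x <- r | P x) hyper_act (f x) u.
Proof. exact: (big_morph (hyper_act^~ u) (fun h1 h2 => hyper_actD h1 h2 u) (hyper_act0 u)). Qed.

Lemma hyper_act_PBW i j k u : hyper_act (PBW i j k) u = PBW_op i j k u.
Proof.
set M := (maxn i (maxn j k)).+1.
have M3 : in_cube M i j k by rewrite /in_cube !ltnS !leq_max !leqnn !orbT.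
pose d i' j' k' : F := [&& i' == i, j' == j & k' == k]%:R.
rewrite (@hyper_act_expansion _ M d) => [| i' j' k' out | ].
- rewrite -[RHS](sum3_delta (fun i j k => PBW_op i j k u) M3).
  by apply: eq_sum3 => i' j' k' _; rewrite /d; case: (_ && _); rewrite ?ghat_scale1r ?ghat_scale0r.
- by rewrite /d; case: and3P => // -[/eqP ei /eqP ej /eqP ek]; rewrite ei ej ek M3 in out.
rewrite -[LHS](sum3_delta (fun i j k => PBW i j k) M3).
by apply: eq_sum3 => i' j' k' _; rewrite /d; case: (_ && _); rewrite ?scale1r ?scale0r.
Qed.

Lemma hyper_act_sum3 N f u :
  hyper_act (sum3 N f) u = sum3 N (fun i j k => hyper_act (f i j k) u).
Proof. exact: (sum3_morph N f (fun h1 h2 => hyper_actD h1 h2 u) (hyper_act0 u)). Qed.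

Lemma PBW_opD i j k (u v : ghat) : PBW_op i j k (u + v) = PBW_op i j k u + PBW_op i j k v.
Proof. by rewrite /PBW_op /Lm_op /L0_op /Lp_op !wshiftD. Qed.

Lemma PBW_opZ i j k c (u : ghat) :
  PBW_op i j k (ghat_scale c u) = ghat_scale c (PBW_op i j k u).
Proof. by rewrite /PBW_op /Lm_op /L0_op /Lp_op !wshiftZ. Qed.

Lemma hyper_act_addr h (u v : ghat) : hyper_act h (u + v) = hyper_act h u + hyper_act h v.
Proof. by rewrite /hyper_act sum3D; apply: eq_sum3 => *; rewrite PBW_opD ghat_scalerDr. Qed.

Lemma hyper_act_scaler c h (u : ghat) :
  hyper_act h (ghat_scale c u) = ghat_scale c (hyper_act h u).
Proof.
rewrite /hyper_act (sum3_morph _ _ (ghat_scalerDr c) (ghat_scaler0 _ c)).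
by apply: eq_sum3 => *; rewrite PBW_opZ !ghat_scalerA mulrC.
Qed.

Lemma hyper_act_mull (x : H) phi d :
  (forall i j k u, hyper_act (x * PBW i j k) u = wshift phi d (PBW_op i j k u)) ->
  forall y u, hyper_act (x * y) u = wshift phi d (hyper_act y u).
Proof.
move=> xPBW y u.
have -> : x * y = sum3 (pbw_bound y) (fun i j k => pbw_coord y i j k *: (x * PBW i j k)).
  rewrite [in LHS](pbw_coordE (leqnn (pbw_bound y))) (sum3_morph _ _ (mulrDr x) (mulr0 x)).
  by apply: eq_sum3 => i j k _; rewrite [RHS]scalerAr.
rewrite hyper_act_sum3 [in RHS]/hyper_act (sum3_morph _ _ (wshiftD phi d) (wshift0 _ phi d)).
by apply: eq_sum3 => *; rewrite hyper_actZ xPBW wshiftZ.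
Qed.

Lemma PBW_L0_Lp j k : L0 j * Lp k = PBW 0 j k.
Proof. by rewrite /PBW (hyp_Lm0 hypH) mul1r. Qed.

Lemma PBW_Lp k : Lp k = PBW 0 0 k.
Proof. by rewrite -PBW_L0_Lp (hyp_L00 hypH) mul1r. Qed.

Lemma hyper_act_Lm r y u : hyper_act (Lm r * y) u = Lm_op r (hyper_act y u).
Proof.
apply: hyper_act_mull => i j k {}u.
rewrite /PBW !mulrA (hyp_LmLm hypH) -!scalerAl hyper_actZ hyper_act_PBW.
by rewrite -Lm_op_mul.
Qed.

Lemma hyper_act_L0 r y u : hyper_act (L0 r * y) u = L0_op r (hyper_act y u).
Proof.
apply: hyper_act_mull => i j k {}u; rewrite -/(L0_op r).
rewrite /PBW !mulrA (hyp_L0Lm hypH) !mulr_suml hyper_act_sum /PBW_op L0_Lm_op.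
apply: eq_bigr => m _; rewrite -!scalerAl hyper_actZ -!mulrA hyper_act_Lm; congr (ghat_scale _ (Lm_op i _)).
rewrite mulrA (hyp_L0L0 hypH) mulr_suml hyper_act_sum L0_op_mul; apply: eq_bigr => l _.
by rewrite -scalerAl hyper_actZ PBW_L0_Lp hyper_act_PBW /PBW_op Lm_op0.
Qed.

Lemma hyper_act_Lp_L0_Lp a j k u :
  hyper_act (Lp a * (L0 j * Lp k)) u = Lp_op a (L0_op j (Lp_op k u)).
Proof.
rewrite mulrA (hyp_LpL0 hypH) mulr_suml hyper_act_sum Lp_L0_op; apply: eq_bigr => m _.
rewrite -scalerAl hyper_actZ -mulrA hyper_act_L0 (hyp_LpLp hypH) hyper_actZ PBW_Lp.
by rewrite hyper_act_PBW /PBW_op Lm_op0 L0_op0 Lp_op_mul.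
Qed.

Lemma hyper_act_Lp r y u : hyper_act (Lp r * y) u = Lp_op r (hyper_act y u).
Proof.
apply: hyper_act_mull => i j k {}u; rewrite -/(Lp_op r).
rewrite /PBW !mulrA (hyp_LpLm hypH) !mulr_suml hyper_act_sum /PBW_op Lp_Lm_op.
apply: eq_bigr => t _; rewrite -!scalerAl hyper_actZ -!mulrA hyper_act_Lm.
congr (ghat_scale _ (Lm_op _ _)).
rewrite /L0shift mulr_suml hyper_act_sum; apply: eq_bigr => m _.
by rewrite -scalerAl hyper_actZ hyper_act_L0 hyper_act_Lp_L0_Lp.
Qed.

Lemma hyper_act_mul h1 h2 u : hyper_act (h1 * h2) u = hyper_act h1 (hyper_act h2 u).
Proof.
rewrite [in LHS](pbw_coordE (leqnn (pbw_bound h1))).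
rewrite (sum3_morph _ _ (fun x y => mulrDl x y h2) (mul0r h2)) hyper_act_sum3.
set v := hyper_act h2 u; rewrite [in RHS]/hyper_act.
apply: eq_sum3 => i j k _; rewrite -scalerAl hyper_actZ /PBW -!mulrA.
by rewrite hyper_act_Lm hyper_act_L0 hyper_act_Lp.
Qed.

Lemma hyper_act1 u : hyper_act 1 u = u.
Proof.
have -> : 1 = PBW 0 0 0 by rewrite /PBW (hyp_Lm0 hypH) (hyp_L00 hypH) (hyp_Lp0 hypH) !mul1r.
by rewrite hyper_act_PBW /PBW_op Lp_op0 L0_op0 Lm_op0.
Qed.

End HyperalgebraAction.

Unset Implicit Arguments.
Set Strict Implicit.
Set Printing Implicit Defensive.

Theorem lemma5p1
  (F : closedFieldType) (p : nat)
  (p_prime : prime p) (p_odd : p != 2%N) (charF : p \in [pchar F])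
  (H : algType F) (Lm L0 Lp : nat -> H)
  (hypH : is_hyperalgebra_sl2 Lm L0 Lp)
  (g : lmodType F) (br : g -> g -> g) (form : g -> g -> F)
  (lie_g : is_lie_bracket br) (form_g : is_sym_inv_form br form) :
  exists act : H -> ghat g -> ghat g,
    (* act is an H-module structure on ghat (F-bilinear, unital, associative) *)
    [/\ (forall h1 h2 u, act (h1 + h2) u = act h1 u + act h2 u),
        (forall (c : F) h u, act (c *: h) u = ghat_scale c (act h u)),
        (forall h u v, act h (u + v) = act h u + act h v),
        (forall (c : F) h u, act h (ghat_scale c u) = ghat_scale c (act h u)) &
        ((forall u, act 1 u = u) /\
        (forall h1 h2 u, act (h1 * h2) u = act h1 (act h2 u)))] /\
    (* the prescribed action on k and on a (x) t^n *)
    [/\ (forall r, act (Lm r) (kc g) = if r == 0%N then kc g else 0),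
        (forall r, act (Lp r) (kc g) = if r == 0%N then kc g else 0) &
        (forall r, act (L0 r) (kc g) = if r == 0%N then kc g else 0)] /\
    [/\ (forall r (a : g) (n : int),
           act (Lm r) (tn a n) = tn (((-1) ^+ r * gbinom n r)%:~R *: a) (n - r%:Z)),
        (forall r (a : g) (n : int),
           act (Lp r) (tn a n) = tn ((gbinom (- n) r)%:~R *: a) (n + r%:Z)) &
        (forall r (a : g) (n : int),
           act (L0 r) (tn a n) = tn ((gbinom (2%:Z * n) r)%:~R *: a) n)] /\
    (* module Lie algebra condition  b[u,v] = sum [b(1) u, b(2) v],
       on the PBW basis, with Delta(L^{(i)}_{-1} L^{(j)}_0 L^{(k)}_1)
       = sum L^{(i1)}_{-1} L^{(j1)}_0 L^{(k1)}_1 (x) L^{(i-i1)}_{-1} L^{(j-j1)}_0 L^{(k-k1)}_1 *)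
    (forall (i j k : nat) (u v : ghat g),
       act (PBW Lm L0 Lp i j k) (ghat_br br form u v) =
       \sum_(i1 < i.+1) \sum_(j1 < j.+1) \sum_(k1 < k.+1)
          ghat_br br form (act (PBW Lm L0 Lp i1 j1 k1) u)
                          (act (PBW Lm L0 Lp (i - i1) (j - j1) (k - k1)) v)).
Proof.
have act_gen (L : nat -> H) (op : nat -> ghat g -> ghat g) :
    (forall r y u, hyper_act hypH (L r * y) u = op r (hyper_act hypH y u)) ->
    forall r u, hyper_act hypH (L r) u = op r u.
  by move=> hL r u; rewrite -[L r]mulr1 hL hyper_act1.
have act_Lm := act_gen _ _ (@hyper_act_Lm _ _ _ _ _ hypH g).
have act_Lp := act_gen _ _ (@hyper_act_Lp _ _ _ _ _ hypH g).
have act_L0 := act_gen _ _ (@hyper_act_L0 _ _ _ _ _ hypH g).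
exists (hyper_act hypH (g := g)); split; [|split; [|split]].
- split; [exact: hyper_actD | exact: hyper_actZ | exact: hyper_act_addr |
    exact: hyper_act_scaler | split; [exact: hyper_act1 | exact: hyper_act_mul]].
- by split=> r; rewrite (act_Lm, act_Lp, act_L0) (Lm_op_kc, Lp_op_kc, L0_op_kc).
- by split=> r a n; rewrite (act_Lm, act_Lp, act_L0) /Lm_op /Lp_op /L0_op wshift_tn ?addr0.
- move=> i j k u v; rewrite hyper_act_PBW (PBW_op_br lie_g form_g).
  by do 3!(apply: eq_bigr => ? _); rewrite !hyper_act_PBW.
Qed.
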